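(* $\gamma^{L-ID}(\mathcal{S})=\frac{3}{11}$: every local identifying code in the square grid has density at least $3/11$, and there is a local identifying code in the square grid of density $3/11$.
   Context: The square grid $\mathcal{S}$ has vertex set $\mathbb{Z}^2$, with $\mathbf{u},\mathbf{v}$ adjacent iff $\mathbf{u}-\mathbf{v}\in\{(\pm1,0),(0,\pm1)\}$. For a nonempty $C\subseteq\mathbb{Z}^2$ and vertex $\mathbf{u}$, $I(\mathbf{u})=N[\mathbf{u}]\cap C$ where $N[\mathbf{u}]$ is the closed neighbourhood. $C$ is a local identifying code if $I(\mathbf{u})\ne\emptyset$ for all $\mathbf{u}$ and $I(\mathbf{u})\ne I(\mathbf{v})$ for all adjacent $\mathbf{u},\mathbf{v}$. The density of $C$ is $D(C)=\limsup_{n\to\infty}|C\cap Q_n|/|Q_n|$ with $Q_n=\{(i,j)\in\mathbb{Z}^2:|i|\le n,|j|\le n\}$. $\gamma^{L-ID}(G)$ denotes the smallest density of a local identifying code in $G$. *)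

From Stdlib Require Import Reals ZArith List.
From Coquelicot Require Import Coquelicot.
Open Scope R_scope.

Definition vertex := (Z * Z)%type.

Definition adj (u v : vertex) : Prop :=
  let dx := (fst u - fst v)%Z in let dy := (snd u - snd v)%Z in
  (dx = 1%Z /\ dy = 0%Z) \/ (dx = (-1)%Z /\ dy = 0%Z) \/
  (dx = 0%Z /\ dy = 1%Z) \/ (dx = 0%Z /\ dy = (-1)%Z).

Definition closed_nbhd (u w : vertex) : Prop := w = u \/ adj u w.

Definition code := vertex -> bool.

Definition Iset (C : code) (u : vertex) (w : vertex) : Prop :=
  closed_nbhd u w /\ C w = true.

Definition local_identifying_code (C : code) : Prop :=
  (exists w, C w = true) /\
  (forall u, exists w, Iset C u w) /\
  (forall u v, adj u v -> ~ (forall w, Iset C u w <-> Iset C v w)).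

(* Q_n = {(i,j) : |i| <= n, |j| <= n} enumerated as a list *)
Definition Zrange (n : nat) : list Z :=
  map (fun k => (Z.of_nat k - Z.of_nat n)%Z) (seq 0 (2 * n + 1)).
Definition Qn (n : nat) : list vertex := list_prod (Zrange n) (Zrange n).

Definition count_in_Qn (C : code) (n : nat) : nat :=
  length (filter C (Qn n)).

Definition density (C : code) : Rbar :=
  LimSup_seq (fun n => INR (count_in_Qn C n) / INR (length (Qn n))).

From Stdlib Require Import Reals.
From Coquelicot Require Import Coquelicot.
From Stdlib Require Import ZArith List Bool Lia Lra FunctionalExtensionality.
Import ListNotations.

(* A code C is a local identifying code iff every vertex is
   dominated and every edge {u, u+e} is separated by a code vertex of
   N[u] ∆ N[u+e] (lic_iff); both conditions are local.  Every vertex v takes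
   a share 60/|I(v)| from each code vertex of I(v), and a code vertex with a
   single code neighbour takes 10 more from that neighbour.  A code vertex
   owns 220 = 60 * 11/3, and an exhaustive check over the 2^13 patterns of
   the l1-ball of radius 2 shows that no vertex ends with a negative balance
   (balance_nonneg).  Summed over Q_n, the balances equal
   220 |C ∩ Q_n| - 60 |Q_n| up to a boundary term O(n) (zsum_balance), so
   |C ∩ Q_n| >= 3/11 |Q_n| - O(n).

   Cstar = {(x, y) : 4x + y mod 11 < 3} is a local
   identifying code (a check over the 11 residues) with
   |Cstar ∩ Q_n| = 3/11 |Q_n| + O(n), since each row of Q_n runs through
   consecutive residues.

   Finally O(n) errors vanish relative to |Q_n| = (2n+1)^2, which turns both
   counting bounds into statements on the limsup density. *)

Open Scope Z_scope.

Definition vadd (u v : vertex) : vertex := (fst u + fst v, snd u + snd v).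
Definition vsub (u v : vertex) : vertex := (fst u - fst v, snd u - snd v).
Definition vneg (u : vertex) : vertex := (- fst u, - snd u).

Definition norm1 (o : vertex) : Z := Z.abs (fst o) + Z.abs (snd o).

Lemma vadd_vsub (u v : vertex) : vadd u (vsub v u) = v.
Proof. destruct u, v; unfold vadd, vsub; simpl; f_equal; ring. Qed.

Lemma vsub_vadd (u o : vertex) : vsub (vadd u o) u = o.
Proof. destruct u, o; unfold vadd, vsub; simpl; f_equal; ring. Qed.

Lemma vsub_vadd_vadd (u o e : vertex) : vsub (vadd u o) (vadd u e) = vsub o e.
Proof. destruct u, o, e; unfold vadd, vsub; simpl; f_equal; ring. Qed.

Lemma vsub_vsub (w u e : vertex) : vsub (vsub w u) e = vsub w (vadd u e).
Proof. destruct w, u, e; unfold vadd, vsub; simpl; f_equal; ring. Qed.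

Lemma vadd_assoc (u v w : vertex) : vadd u (vadd v w) = vadd (vadd u v) w.
Proof. destruct u, v, w; unfold vadd; simpl; f_equal; ring. Qed.

Lemma vadd_0_r (u : vertex) : vadd u (0,0) = u.
Proof. destruct u; unfold vadd; simpl; f_equal; ring. Qed.

Lemma closed_nbhd_norm1 (u w : vertex) : closed_nbhd u w <-> norm1 (vsub w u) <= 1.
Proof.
  destruct u as [x y], w as [p q]; unfold closed_nbhd, adj, norm1, vsub; simpl.
  split.
  - intros [H|H]; [injection H as -> ->|]; lia.
  - intros H; destruct (Z.eq_dec p x), (Z.eq_dec q y); [left; congruence|right; lia..].
Qed.

Lemma adj_norm1 (u v : vertex) : adj u v <-> norm1 (vsub v u) = 1.
Proof. destruct u as [x y], v as [p q]; unfold adj, norm1, vsub; simpl; lia. Qed.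

Definition ball : list vertex := [(0,0); (1,0); (-1,0); (0,1); (0,-1)].
Definition steps : list vertex := [(1,0); (-1,0); (0,1); (0,-1)].

Lemma in_ball (o : vertex) : In o ball <-> norm1 o <= 1.
Proof.
  destruct o as [p q]; unfold ball, norm1; simpl; split.
  - intros H; repeat (destruct H as [H|H]; [injection H as <- <-; simpl; lia|]); destruct H.
  - intros H; assert (Hc : (p = 0 /\ q = 0) \/ (p = 1 /\ q = 0) \/ (p = -1 /\ q = 0)
                        \/ (p = 0 /\ q = 1) \/ (p = 0 /\ q = -1)) by lia.
    repeat destruct Hc as [Hc|Hc]; destruct Hc as [-> ->]; tauto.
Qed.

Lemma in_steps (e : vertex) : In e steps <-> norm1 e = 1.
Proof.
  destruct e as [p q]; unfold steps, norm1; simpl; split.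
  - intros H; repeat (destruct H as [H|H]; [injection H as <- <-; simpl; lia|]); destruct H.
  - intros H; assert (Hc : (p = 1 /\ q = 0) \/ (p = -1 /\ q = 0)
                        \/ (p = 0 /\ q = 1) \/ (p = 0 /\ q = -1)) by lia.
    repeat destruct Hc as [Hc|Hc]; destruct Hc as [-> ->]; tauto.
Qed.

(* A local configuration: the code C seen from the vertex u, which becomes
   the origin.  All local conditions below are stated at the origin. *)
Definition shift (C : code) (u : vertex) : code := fun w => C (vadd u w).

Lemma shift_shift (C : code) (u v : vertex) : shift (shift C u) v = shift C (vadd u v).
Proof.
  apply functional_extensionality; intros w; unfold shift; rewrite vadd_assoc; reflexivity.
Qed.

Definition dominated (g : code) : bool := existsb g ball.

Definition sym_diff (e o : vertex) : bool := xorb (norm1 o <=? 1) (norm1 (vsub o e) <=? 1).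

(* The origin and e are separated: some code vertex lies in N[0] ∆ N[e].
   It suffices to search N[0] ∪ N[e]. *)
Definition separated (g : code) (e : vertex) : bool :=
  existsb (fun o => g o && sym_diff e o) (ball ++ map (vadd e) ball).

Lemma sym_diff_candidate (e o : vertex) :
  sym_diff e o = true -> In o (ball ++ map (vadd e) ball).
Proof.
  unfold sym_diff; intros Hx; apply in_or_app; revert Hx.
  destruct (Z.leb_spec (norm1 o) 1) as [H1|H1],
    (Z.leb_spec (norm1 (vsub o e)) 1) as [H2|H2]; intros Hx; try discriminate.
  - left; apply in_ball; exact H1.
  - right; rewrite <- (vadd_vsub e o); apply in_map, in_ball; exact H2.
Qed.

Lemma Iset_norm1 (C : code) (u w : vertex) :
  Iset C u w <-> norm1 (vsub w u) <= 1 /\ C w = true.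
Proof. unfold Iset; rewrite closed_nbhd_norm1; tauto. Qed.

Lemma dominated_spec (C : code) (u : vertex) :
  dominated (shift C u) = true <-> exists w, Iset C u w.
Proof.
  unfold dominated; rewrite existsb_exists; split.
  - intros [o [Ho Hc]]; exists (vadd u o); apply Iset_norm1.
    rewrite vsub_vadd; split; [apply in_ball|]; assumption.
  - intros [w Hw]; apply Iset_norm1 in Hw as [Hn Hc].
    exists (vsub w u); split; [apply in_ball; exact Hn|].
    unfold shift; rewrite vadd_vsub; exact Hc.
Qed.

Lemma Iset_same_iff (C : code) (u e w : vertex) : C w = true ->
  ((Iset C u w <-> Iset C (vadd u e) w) <-> sym_diff e (vsub w u) = false).
Proof.
  intros Hw; rewrite !Iset_norm1, <- vsub_vsub; unfold sym_diff.
  destruct (Z.leb_spec (norm1 (vsub w u)) 1),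
    (Z.leb_spec (norm1 (vsub (vsub w u) e)) 1); cbn [xorb negb];
    intuition (try discriminate; lia).
Qed.

Lemma separated_spec (C : code) (u e : vertex) :
  separated (shift C u) e = true <-> ~ (forall w, Iset C u w <-> Iset C (vadd u e) w).
Proof.
  unfold separated; split.
  - rewrite existsb_exists; intros [o [_ Ho]] Hsame.
    apply andb_prop in Ho as [Hc Hx]; unfold shift in Hc.
    apply (Iset_same_iff C u e) in Hc; rewrite vsub_vadd in Hc.
    apply Hc in Hsame; congruence.
  - intros Hnot.
    destruct (existsb _ _) eqn:Hs; [reflexivity|exfalso; apply Hnot; intros w].
    destruct (C w) eqn:Hw; [|unfold Iset; rewrite Hw; intuition discriminate].
    apply Iset_same_iff; [exact Hw|].
    destruct (sym_diff e (vsub w u)) eqn:Hx; [|reflexivity].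
    rewrite <- Hs; symmetry; apply existsb_exists; exists (vsub w u).
    split; [apply sym_diff_candidate, Hx|].
    unfold shift; rewrite vadd_vsub, Hw, Hx; reflexivity.
Qed.

Lemma lic_iff (C : code) :
  local_identifying_code C <->
  (exists w, C w = true) /\
  (forall u, dominated (shift C u) = true /\
             forall e, norm1 e = 1 -> separated (shift C u) e = true).
Proof.
  unfold local_identifying_code; split.
  - intros [Hw [Hd Hs]]; split; [exact Hw|]; intros u; split.
    + apply dominated_spec, Hd.
    + intros e He; apply separated_spec, Hs, adj_norm1; rewrite vsub_vadd; exact He.
  - intros [Hw Hloc]; split; [exact Hw|]; split.
    + intros u; apply dominated_spec, Hloc.
    + intros u v Huv; apply adj_norm1 in Huv.
      rewrite <- (vadd_vsub u v); apply separated_spec, Hloc, Huv.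
Qed.

Definition ind (b : bool) : Z := if b then 1 else 0.

Definition zsum {A : Type} (f : A -> Z) (l : list A) : Z :=
  fold_right (fun a s => f a + s) 0 l.

Lemma zsum_cons {A : Type} (f : A -> Z) (a : A) (l : list A) :
  zsum f (a :: l) = f a + zsum f l.
Proof. reflexivity. Qed.

Lemma zsum_app {A : Type} (f : A -> Z) (l1 l2 : list A) :
  zsum f (l1 ++ l2) = zsum f l1 + zsum f l2.
Proof. induction l1 as [|a l1 IH]; simpl; [|rewrite IH]; ring. Qed.

Lemma zsum_map {A B : Type} (f : B -> Z) (g : A -> B) (l : list A) :
  zsum f (map g l) = zsum (fun x => f (g x)) l.
Proof. induction l as [|a l IH]; simpl; [|rewrite IH]; reflexivity. Qed.

Lemma zsum_ext {A : Type} (f g : A -> Z) (l : list A) :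
  (forall x, f x = g x) -> zsum f l = zsum g l.
Proof. intros H; induction l as [|a l IH]; simpl; [|rewrite IH, H]; reflexivity. Qed.

Lemma zsum_add {A : Type} (f g : A -> Z) (l : list A) :
  zsum (fun x => f x + g x) l = zsum f l + zsum g l.
Proof. induction l as [|a l IH]; simpl; [|rewrite IH]; ring. Qed.

Lemma zsum_sub {A : Type} (f g : A -> Z) (l : list A) :
  zsum (fun x => f x - g x) l = zsum f l - zsum g l.
Proof. induction l as [|a l IH]; simpl; [|rewrite IH]; ring. Qed.

Lemma zsum_scal {A : Type} (c : Z) (f : A -> Z) (l : list A) :
  zsum (fun x => c * f x) l = c * zsum f l.
Proof. induction l as [|a l IH]; simpl; [|rewrite IH]; ring. Qed.

Lemma zsum_const {A : Type} (c : Z) (l : list A) :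
  zsum (fun _ => c) l = c * Z.of_nat (length l).
Proof. induction l as [|a l IH]; simpl length; [simpl; ring|]; simpl; rewrite IH; lia. Qed.

Lemma zsum_nonneg {A : Type} (f : A -> Z) (l : list A) :
  (forall x, In x l -> 0 <= f x) -> 0 <= zsum f l.
Proof.
  induction l as [|a l IH]; intros H; simpl; [lia|].
  pose proof (H a (or_introl eq_refl)); pose proof (IH (fun x Hx => H x (or_intror Hx))); lia.
Qed.

Lemma zsum_abs {A : Type} (f : A -> Z) (l : list A) (K : Z) :
  (forall x, In x l -> Z.abs (f x) <= K) -> Z.abs (zsum f l) <= K * Z.of_nat (length l).
Proof.
  induction l as [|a l IH]; intros H; simpl length; [simpl; lia|]; simpl.
  pose proof (H a (or_introl eq_refl)); pose proof (IH (fun x Hx => H x (or_intror Hx))); lia.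
Qed.

Lemma zsum_swap {A B : Type} (F : A -> B -> Z) (l1 : list A) (l2 : list B) :
  zsum (fun a => zsum (F a) l2) l1 = zsum (fun b => zsum (fun a => F a b) l1) l2.
Proof.
  induction l1 as [|a l1 IH]; simpl.
  - rewrite zsum_const; ring.
  - rewrite IH, <- zsum_add; reflexivity.
Qed.

Lemma zsum_prod (f : vertex -> Z) (l1 l2 : list Z) :
  zsum f (list_prod l1 l2) = zsum (fun i => zsum (fun j => f (i, j)) l2) l1.
Proof. induction l1 as [|a l1 IH]; simpl; [|rewrite zsum_app, zsum_map, IH]; reflexivity. Qed.

Definition is_origin (o : vertex) : bool := (fst o =? 0) && (snd o =? 0).

Definition code_count (g : code) : Z := zsum (fun o => ind (g o)) ball.

(* A code vertex with exactly one code neighbour. *)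
Definition lonely (g : code) : bool := g (0,0) && (code_count g =? 2).

(* The discharging rule, in units of 1/60 of a vertex.  Every vertex v needs
   60 and takes the share 60/|I(v)| from each code vertex of I(v); a lonely
   code vertex moreover takes 10 from its unique code neighbour.  A code
   vertex is credited 220 = 60 * 11/3, plus these 10 if it is lonely.
   [demand g o] is what the origin of g takes from the vertex at offset o. *)
Definition share (g : code) : Z := 60 / code_count g.

Definition demand (g : code) (o : vertex) : Z :=
  ind (g o) * (share g + if is_origin o then 0 else 10 * ind (lonely g)).

Definition credit (g : code) : Z := 220 * ind (g (0,0)) + 10 * ind (lonely g).

(* What remains to the origin after all its neighbours took their demands. *)
Definition balance (g : code) : Z :=
  credit g - zsum (fun o => demand (shift g o) (vneg o)) ball.

Lemma share_range (g : code) : 0 <= share g <= 60.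
Proof.
  unfold share, code_count, zsum, ball; simpl.
  destruct (g (0,0)), (g (1,0)), (g (-1,0)), (g (0,1)), (g (0,-1));
    split; vm_compute; discriminate.
Qed.

Lemma demand_range (g : code) (o : vertex) : 0 <= demand g o <= 70.
Proof.
  pose proof (share_range g); unfold demand.
  destruct (g o), (is_origin o), (lonely g); cbn [ind]; lia.
Qed.

Lemma total_demand (g : code) :
  dominated g = true -> zsum (demand g) ball = 60 + 10 * ind (lonely g).
Proof.
  unfold dominated, demand, lonely, share, code_count, zsum, ball; simpl.
  destruct (g (0,0)), (g (1,0)), (g (-1,0)), (g (0,1)), (g (0,-1));
    simpl; congruence.
Qed.

Definition valid (g : code) : bool :=
  forallb (fun o => dominated (shift g o)) ball && forallb (separated g) steps.

(* The offsets at l1-distance at most 2: validity and balance of the origin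
   only read the configuration there. *)
Definition window : list vertex :=
  [(0,0); (1,0); (-1,0); (0,1); (0,-1); (2,0); (-2,0); (0,2); (0,-2);
   (1,1); (1,-1); (-1,1); (-1,-1)].

Fixpoint lookup (ps : list vertex) (bs : list bool) (p : vertex) : bool :=
  match ps, bs with
  | q :: ps', b :: bs' =>
      if (fst p =? fst q) && (snd p =? snd q) then b else lookup ps' bs' p
  | _, _ => false
  end.

Lemma lookup_map (g : code) (ps : list vertex) (p : vertex) :
  In p ps -> lookup ps (map g ps) p = g p.
Proof.
  induction ps as [|q ps IH]; [intros []|]; intros Hp; simpl.
  destruct (fst p =? fst q) eqn:E1, (snd p =? snd q) eqn:E2; simpl;
    [| apply IH; destruct Hp as [<-|Hp]; [rewrite Z.eqb_refl in *; discriminate|exact Hp]..].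
  apply Z.eqb_eq in E1, E2; destruct p, q; simpl in *; subst; reflexivity.
Qed.

Fixpoint all_bits (n : nat) : list (list bool) :=
  match n with
  | O => [[]]
  | S n' => map (cons true) (all_bits n') ++ map (cons false) (all_bits n')
  end.

Lemma all_bits_complete (n : nat) (bs : list bool) : length bs = n -> In bs (all_bits n).
Proof.
  revert bs; induction n as [|n IH]; intros [|b bs] Hl; try discriminate; simpl; [now left|].
  apply in_or_app; injection Hl as Hl.
  destruct b; [left|right]; apply in_map, IH, Hl.
Qed.

Lemma window_check :
  forallb (fun bs => let g := lookup window bs in negb (valid g) || (0 <=? balance g))
          (all_bits 13) = true.
Proof. vm_compute. reflexivity. Qed.

(* Configurations agreeing on the window have the same validity and balance;
   every point read by [valid] and [balance] is a concrete window point. *)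
Lemma window_congr (g h : code) :
  (forall p, In p window -> h p = g p) -> valid h = valid g /\ balance h = balance g.
Proof.
  intros H.
  unfold valid, balance, dominated, separated, demand, credit, lonely, share,
    code_count, zsum, shift, ball, steps; simpl.
  repeat match goal with
         | |- context [h ?p] => rewrite (H p) by (simpl; repeat (first [left; reflexivity | right]))
         end.
  split; reflexivity.
Qed.

Lemma balance_nonneg (g : code) : valid g = true -> 0 <= balance g.
Proof.
  intros Hv.
  set (h := lookup window (map g window)).
  destruct (window_congr g h) as [Ev Eb]; [intros p; apply lookup_map|].
  pose proof window_check as Hc; rewrite forallb_forall in Hc.
  specialize (Hc (map g window) (all_bits_complete _ _ (length_map _ _))).
  cbv beta zeta in Hc; fold h in Hc; rewrite Ev, Eb, Hv in Hc; simpl in Hc.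
  apply Z.leb_le, Hc.
Qed.

Definition side (n : nat) : Z := 2 * Z.of_nat n + 1.

Lemma length_Zrange (n : nat) : Z.of_nat (length (Zrange n)) = side n.
Proof. unfold Zrange, side; rewrite length_map, length_seq; lia. Qed.

Lemma length_Qn (n : nat) : Z.of_nat (length (Qn n)) = side n * side n.
Proof.
  pose proof (length_prod (Zrange n) (Zrange n)) as E; unfold Qn, vertex.
  rewrite E, Nat2Z.inj_mul, length_Zrange; reflexivity.
Qed.

Lemma count_in_Qn_zsum (C : code) (n : nat) :
  Z.of_nat (count_in_Qn C n) = zsum (fun v => ind (C v)) (Qn n).
Proof.
  unfold count_in_Qn; induction (Qn n) as [|v l IH]; [reflexivity|].
  rewrite zsum_cons, <- IH; cbn [filter]; destruct (C v); cbn [length ind]; lia.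
Qed.

Lemma zsum_telescope (G : Z -> Z) (a : Z) (len : nat) :
  zsum (fun k => G (Z.of_nat k + a + 1) - G (Z.of_nat k + a)) (seq 0 len)
  = G (Z.of_nat len + a) - G a.
Proof.
  induction len as [|len IH]; [simpl; ring|].
  replace (Z.of_nat (S len) + a) with (Z.of_nat len + a + 1) by lia.
  rewrite seq_S, zsum_app, IH; cbn [zsum fold_right Nat.add]; ring.
Qed.

Lemma zsum_Zrange_succ (G : Z -> Z) (n : nat) :
  zsum (fun i => G (i + 1)) (Zrange n) - zsum G (Zrange n)
  = G (Z.of_nat n + 1) - G (- Z.of_nat n).
Proof.
  unfold Zrange; rewrite !zsum_map, <- zsum_sub.
  rewrite (zsum_ext _ (fun k => G (Z.of_nat k + - Z.of_nat n + 1) - G (Z.of_nat k + - Z.of_nat n)))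
    by (intros k; f_equal; f_equal; lia).
  rewrite zsum_telescope; f_equal; f_equal; lia.
Qed.

Lemma zsum_Zrange_shift (G : Z -> Z) (n : nat) (s K : Z) :
  Z.abs s <= 1 -> (forall i, Z.abs (G i) <= K) ->
  Z.abs (zsum (fun i => G (i + s)) (Zrange n) - zsum G (Zrange n)) <= 2 * K.
Proof.
  intros Hs HK; pose proof (HK 0).
  assert (Hs3 : s = 0 \/ s = 1 \/ s = -1) by lia; destruct Hs3 as [-> | [-> | ->]].
  - rewrite (zsum_ext _ G) by (intros; rewrite Z.add_0_r; reflexivity); lia.
  - rewrite zsum_Zrange_succ.
    pose proof (HK (Z.of_nat n + 1)); pose proof (HK (- Z.of_nat n)); lia.
  - pose proof (zsum_Zrange_succ (fun i => G (i + -1)) n) as E; cbv beta in E.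
    rewrite (zsum_ext (fun i => G (i + 1 + -1)) G) in E
      by (intros; f_equal; ring).
    pose proof (HK (Z.of_nat n + 1 + -1)); pose proof (HK (- Z.of_nat n + -1)); lia.
Qed.

Lemma zsum_Qn_shift (f : vertex -> Z) (n : nat) (o : vertex) (B : Z) :
  norm1 o <= 1 -> (forall v, Z.abs (f v) <= B) ->
  Z.abs (zsum (fun c => f (vadd c o)) (Qn n) - zsum f (Qn n)) <= 2 * B * side n.
Proof.
  destruct o as [a b]; unfold norm1, Qn, vadd; cbn [fst snd]; intros Ho HB.
  rewrite !zsum_prod.
  set (row := fun i => zsum (fun j => f (i, j)) (Zrange n)).
  destruct (Z.eq_dec b 0) as [-> | Hb].
  - rewrite (zsum_ext _ (fun i => row (i + a)))
      by (intros i; apply zsum_ext; intros j; rewrite Z.add_0_r; reflexivity).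
    replace (2 * B * side n) with (2 * (B * side n)) by ring.
    apply zsum_Zrange_shift; [lia|]; intros i.
    rewrite <- length_Zrange; apply zsum_abs; auto.
  - assert (a = 0) by lia; subst a.
    rewrite <- zsum_sub, <- length_Zrange; apply zsum_abs; intros i _.
    rewrite (zsum_ext _ (fun j => f (i, j + b))) by (intros j; rewrite Z.add_0_r; reflexivity).
    apply (zsum_Zrange_shift (fun j => f (i, j))); [lia | auto].
Qed.

Lemma zsum_Qn_ball_shift (D : vertex -> vertex -> Z) (n : nat) (B : Z) :
  (forall c o, Z.abs (D c o) <= B) ->
  Z.abs (zsum (fun c => zsum (fun o => D (vadd c o) o) ball) (Qn n)
         - zsum (fun c => zsum (D c) ball) (Qn n)) <= 10 * B * side n.
Proof.
  intros HB.
  rewrite (zsum_swap (fun c o => D (vadd c o) o)), (zsum_swap D), <- zsum_sub.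
  replace (10 * B * side n) with (2 * B * side n * Z.of_nat (length ball))
    by (change (Z.of_nat (length ball)) with 5; ring).
  apply zsum_abs; intros o Ho.
  apply (zsum_Qn_shift (fun c => D c o)); [apply in_ball, Ho | intros v; apply HB].
Qed.

Lemma zsum_ball_vneg (h : vertex -> Z) : zsum (fun o => h (vneg o)) ball = zsum h ball.
Proof. unfold zsum, ball, vneg; simpl; ring. Qed.

(* Summing the balances over Q_n: the demands cancel against the shares up to
   the boundary, leaving 220 |C ∩ Q_n| - 60 |Q_n|. *)
Lemma zsum_balance (C : code) (n : nat) :
  (forall u, dominated (shift C u) = true) ->
  Z.abs (zsum (fun c => balance (shift C c)) (Qn n)
         - (220 * Z.of_nat (count_in_Qn C n) - 60 * (side n * side n))) <= 700 * side n.
Proof.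
  intros Hdom.
  set (D := fun c o => demand (shift C c) (vneg o)).
  assert (Hbal : forall c, balance (shift C c)
                           = credit (shift C c) - zsum (fun o => D (vadd c o) o) ball).
  { intros c; unfold balance, D; f_equal; apply zsum_ext; intros o.
    rewrite shift_shift; reflexivity. }
  assert (Hloc : forall c, credit (shift C c) - zsum (D c) ball = 220 * ind (C c) - 60).
  { intros c; unfold D; rewrite (zsum_ball_vneg (demand (shift C c))), total_demand by apply Hdom.
    unfold credit, shift; rewrite vadd_0_r; ring. }
  assert (Htotal : zsum (fun c => credit (shift C c)) (Qn n)
                   - zsum (fun c => zsum (D c) ball) (Qn n)
                   = 220 * Z.of_nat (count_in_Qn C n) - 60 * (side n * side n)).
  { rewrite <- zsum_sub, (zsum_ext _ _ _ Hloc), zsum_sub, zsum_scal, zsum_const,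
      count_in_Qn_zsum, length_Qn; reflexivity. }
  pose proof (zsum_Qn_ball_shift D n 70) as Hshift.
  rewrite (zsum_ext _ _ _ Hbal), zsum_sub.
  assert (Habs : forall c o, Z.abs (D c o) <= 70)
    by (intros c o; pose proof (demand_range (shift C c) (vneg o)); unfold D; lia).
  specialize (Hshift Habs); lia.
Qed.

Lemma count_lower_bound (C : code) : local_identifying_code C -> forall n,
  3 * (side n * side n) - 35 * side n <= 11 * Z.of_nat (count_in_Qn C n).
Proof.
  intros HC n; apply lic_iff in HC as [_ Hloc].
  assert (Hvalid : forall c, valid (shift C c) = true).
  { intros c; unfold valid; apply andb_true_intro; split; apply forallb_forall.
    - intros o _; rewrite shift_shift; apply Hloc.
    - intros e He; apply Hloc, in_steps, He. }
  assert (Hpos : 0 <= zsum (fun c => balance (shift C c)) (Qn n))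
    by (apply zsum_nonneg; intros c _; apply balance_nonneg, Hvalid).
  pose proof (zsum_balance C n (fun u => proj1 (Hloc u))); lia.
Qed.

Definition Cstar : code := fun v => (4 * fst v + snd v) mod 11 <? 3.

Lemma shift_Cstar (u : vertex) : shift Cstar u = shift Cstar (0, (4 * fst u + snd u) mod 11).
Proof.
  apply functional_extensionality; intros w; unfold shift, Cstar, vadd; cbn [fst snd].
  replace (4 * (0 + fst w) + ((4 * fst u + snd u) mod 11 + snd w))
    with ((4 * fst u + snd u) mod 11 + (4 * fst w + snd w)) by ring.
  rewrite Z.add_mod_idemp_l by lia; f_equal; f_equal; ring.
Qed.

Lemma Cstar_check :
  forallb (fun k => let g := shift Cstar (0, Z.of_nat k) in
                    dominated g && forallb (separated g) steps) (seq 0 11) = true.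
Proof. vm_compute. reflexivity. Qed.

Lemma Cstar_lic : local_identifying_code Cstar.
Proof.
  apply lic_iff; split; [exists (0,0); reflexivity|]; intros u.
  rewrite shift_Cstar.
  pose proof (Z.mod_pos_bound (4 * fst u + snd u) 11 ltac:(lia)) as Hr.
  rewrite <- (Z2Nat.id ((4 * fst u + snd u) mod 11)) by lia.
  pose proof Cstar_check as Hc; rewrite forallb_forall in Hc.
  specialize (Hc (Z.to_nat ((4 * fst u + snd u) mod 11)) ltac:(apply in_seq; lia)).
  cbv zeta in Hc; apply andb_prop in Hc as [Hd Hs]; rewrite forallb_forall in Hs.
  split; [exact Hd|]; intros e He; apply Hs, in_steps, He.
Qed.

Fixpoint residue_count (a : Z) (len : nat) : Z :=
  match len with
  | O => 0
  | S l => ind (a mod 11 <? 3) + residue_count (a + 1) l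
  end.

Lemma residue_count_zsum (a : Z) (s len : nat) :
  zsum (fun k => ind ((a + Z.of_nat k) mod 11 <? 3)) (seq s len)
  = residue_count (a + Z.of_nat s) len.
Proof.
  revert s; induction len as [|len IH]; intros s; [reflexivity|].
  cbn [seq residue_count]; rewrite zsum_cons, IH.
  replace (a + Z.of_nat (S s)) with (a + Z.of_nat s + 1) by lia; reflexivity.
Qed.

Lemma residue_count_add (a : Z) (m l : nat) :
  residue_count a (m + l) = residue_count a m + residue_count (a + Z.of_nat m) l.
Proof.
  revert a; induction m as [|m IH]; intros a; cbn [residue_count Nat.add].
  - rewrite Z.add_0_r; ring.
  - rewrite IH; replace (a + 1 + Z.of_nat m) with (a + Z.of_nat (S m)) by lia; ring.
Qed.

Lemma residue_count_range (a : Z) (len : nat) : 0 <= residue_count a len <= Z.of_nat len.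
Proof.
  revert a; induction len as [|len IH]; intros a; cbn [residue_count]; [lia|].
  pose proof (IH (a + 1)); destruct (a mod 11 <? 3); cbn [ind]; lia.
Qed.

Lemma residue_count_mod (a b : Z) (len : nat) :
  a mod 11 = b mod 11 -> residue_count a len = residue_count b len.
Proof.
  revert a b; induction len as [|len IH]; intros a b H; cbn [residue_count]; [reflexivity|].
  rewrite H, (IH (a + 1) (b + 1)); [reflexivity|].
  rewrite Z.add_mod, H, <- Z.add_mod by lia; reflexivity.
Qed.

Lemma residue_count_11 (a : Z) : residue_count a 11 = 3.
Proof.
  rewrite (residue_count_mod a (a mod 11)) by (rewrite Z.mod_mod; lia).
  pose proof (Z.mod_pos_bound a 11 ltac:(lia)).
  rewrite <- (Z2Nat.id (a mod 11)) by lia.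
  set (k := Z.to_nat (a mod 11)).
  assert (Hk : (k < 11)%nat) by lia; clearbody k.
  do 11 (destruct k as [|k]; [reflexivity|]); lia.
Qed.

Lemma residue_count_bound (a : Z) (len : nat) :
  Z.abs (11 * residue_count a len - 3 * Z.of_nat len) <= 80.
Proof.
  assert (Hqr : forall q r a, (r < 11)%nat ->
            Z.abs (11 * residue_count a (11 * q + r) - 3 * Z.of_nat (11 * q + r)) <= 80).
  { induction q as [|q IH]; intros r b Hr.
    - rewrite Nat.mul_0_r, Nat.add_0_l; pose proof (residue_count_range b r); lia.
    - replace (11 * S q + r)%nat with (11 + (11 * q + r))%nat by lia.
      rewrite residue_count_add, residue_count_11.
      specialize (IH r (b + Z.of_nat 11) Hr); lia. }
  rewrite (Nat.div_mod_eq len 11); apply Hqr, Nat.mod_upper_bound; lia.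
Qed.

Lemma Cstar_row (i : Z) (n : nat) :
  zsum (fun j => ind (Cstar (i, j))) (Zrange n) = residue_count (4 * i - Z.of_nat n) (2 * n + 1).
Proof.
  unfold Zrange; rewrite zsum_map.
  rewrite (zsum_ext _ (fun k => ind ((4 * i - Z.of_nat n + Z.of_nat k) mod 11 <? 3)))
    by (intros k; unfold Cstar; cbn [fst snd];
        replace (4 * i + (Z.of_nat k - Z.of_nat n)) with (4 * i - Z.of_nat n + Z.of_nat k) by ring;
        reflexivity).
  rewrite residue_count_zsum, Z.add_0_r; reflexivity.
Qed.

Lemma Cstar_count (n : nat) :
  Z.abs (11 * Z.of_nat (count_in_Qn Cstar n) - 3 * (side n * side n)) <= 80 * side n.
Proof.
  rewrite count_in_Qn_zsum; unfold Qn; rewrite zsum_prod.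
  set (row := fun i => zsum (fun j => ind (Cstar (i, j))) (Zrange n)).
  replace (11 * zsum row (Zrange n) - 3 * (side n * side n))
    with (zsum (fun i => 11 * row i - 3 * side n) (Zrange n))
    by (rewrite zsum_sub, zsum_scal, zsum_const, length_Zrange; ring).
  replace (80 * side n) with (80 * Z.of_nat (length (Zrange n)))
    by (rewrite length_Zrange; reflexivity).
  apply zsum_abs; intros i _; unfold row; rewrite Cstar_row.
  pose proof (residue_count_bound (4 * i - Z.of_nat n) (2 * n + 1)); unfold side; lia.
Qed.

Open Scope R_scope.

Lemma side_pos (n : nat) : 0 < IZR (side n).
Proof. apply IZR_lt; unfold side; lia. Qed.

Lemma INR_length_Qn (n : nat) : INR (length (Qn n)) = IZR (side n) * IZR (side n).
Proof. rewrite INR_IZR_INZ, length_Qn, mult_IZR; reflexivity. Qed.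

Lemma error_vanishes (K : R) : is_lim_seq (fun n => K / (11 * IZR (side n))) 0.
Proof.
  assert (Hinf : is_lim_seq (fun n => 11 * IZR (side n)) p_infty).
  { apply (is_lim_seq_le_p_loc INR); [|exact is_lim_seq_INR].
    exists 0%nat; intros n _; unfold side.
    rewrite plus_IZR, mult_IZR, <- INR_IZR_INZ; pose proof (pos_INR n); lra. }
  replace (Finite 0) with (Rbar_mult K (Rbar_inv p_infty)) by (simpl; f_equal; ring).
  apply is_lim_seq_scal_l, is_lim_seq_inv; [exact Hinf | discriminate].
Qed.

Lemma error_band_lim (K : R) :
  is_lim_seq (fun n => 3 / 11 - K / (11 * IZR (side n))) (3 / 11) /\
  is_lim_seq (fun n => 3 / 11 + K / (11 * IZR (side n))) (3 / 11).
Proof.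
  pose proof (is_lim_seq_minus' _ _ _ _ (is_lim_seq_const (3 / 11)) (error_vanishes K)) as Hlo.
  pose proof (is_lim_seq_plus' _ _ _ _ (is_lim_seq_const (3 / 11)) (error_vanishes K)) as Hhi.
  rewrite Rminus_0_r in Hlo; rewrite Rplus_0_r in Hhi; split; assumption.
Qed.

Lemma ratio_lower (c s K : R) :
  0 < s -> 3 * (s * s) - K * s <= 11 * c -> 3 / 11 - K / (11 * s) <= c / (s * s).
Proof.
  intros Hs H.
  assert (E : c / (s * s) - (3 / 11 - K / (11 * s))
              = (11 * c - (3 * (s * s) - K * s)) / (11 * (s * s))) by (field; lra).
  assert (0 <= (11 * c - (3 * (s * s) - K * s)) / (11 * (s * s)))
    by (apply Rdiv_le_0_compat; [lra | apply Rmult_lt_0_compat; [lra | nra]]).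
  lra.
Qed.

Lemma ratio_upper (c s K : R) :
  0 < s -> 11 * c <= 3 * (s * s) + K * s -> c / (s * s) <= 3 / 11 + K / (11 * s).
Proof.
  intros Hs H.
  assert (E : 3 / 11 + K / (11 * s) - c / (s * s)
              = (3 * (s * s) + K * s - 11 * c) / (11 * (s * s))) by (field; lra).
  assert (0 <= (3 * (s * s) + K * s - 11 * c) / (11 * (s * s)))
    by (apply Rdiv_le_0_compat; [lra | apply Rmult_lt_0_compat; [lra | nra]]).
  lra.
Qed.

Lemma density_lower_bound (C : code) (K : Z) :
  (forall n, 3 * (side n * side n) - K * side n <= 11 * Z.of_nat (count_in_Qn C n))%Z ->
  Rbar_le (3 / 11) (density C).
Proof.
  intros Hc; unfold density.
  destruct (error_band_lim (IZR K)) as [Hlow _].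
  rewrite <- (is_LimSup_seq_unique _ _ (is_lim_LimSup_seq _ _ Hlow)).
  apply LimSup_le; exists 0%nat; intros n _.
  rewrite INR_length_Qn, INR_IZR_INZ; apply ratio_lower; [apply side_pos|].
  specialize (Hc n); apply IZR_le in Hc; rewrite minus_IZR, !mult_IZR in Hc; exact Hc.
Qed.

Lemma density_exact (C : code) (K : Z) :
  (forall n, Z.abs (11 * Z.of_nat (count_in_Qn C n) - 3 * (side n * side n)) <= K * side n)%Z ->
  density C = 3 / 11.
Proof.
  intros Hc; unfold density; apply is_LimSup_seq_unique, is_lim_LimSup_seq.
  destruct (error_band_lim (IZR K)) as [Hlow Hhigh].
  refine (is_lim_seq_le_le _ _ _ _ _ Hlow Hhigh); intros n; cbv beta.
  rewrite INR_length_Qn, INR_IZR_INZ.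
  specialize (Hc n); apply Z.abs_le in Hc as [Hlo Hhi].
  apply IZR_le in Hlo, Hhi.
  rewrite opp_IZR, minus_IZR, !mult_IZR in Hlo; rewrite minus_IZR, !mult_IZR in Hhi.
  split; [apply ratio_lower | apply ratio_upper]; try apply side_pos; lra.
Qed.

Theorem mainTheorem13 :
  (forall C : code, local_identifying_code C -> Rbar_le (Finite (3 / 11)) (density C)) /\
  (exists C : code, local_identifying_code C /\ density C = Finite (3 / 11)).
Proof.
  split.
  - intros C HC; apply (density_lower_bound C 35), count_lower_bound, HC.
  - exists Cstar; split; [exact Cstar_lic|].
    apply (density_exact Cstar 80), Cstar_count.
Qed.
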